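(* Let $n\geqslant 3$, let $D=\{x,y,e_2,\ldots,e_{n-1}\}$ and let $V$ be the set of monoid relations on $D$: (V1) $e_i^2=e_i$ for $2\leqslant i\leqslant n-1$; (V2) $xyx=x$ and $yxy=y$; (V3) $yx^2y=xy^2x$; (V4) $e_ie_j=e_je_i$ for $2\leqslant i<j\leqslant n-1$; (V5) $xye_i=e_ixy$ and $yxe_i=e_iyx$ for $2\leqslant i\leqslant n-1$; (V6) $xe_{i+1}=e_ix$ for $2\leqslant i\leqslant n-2$; (V7) $x^2y=e_{n-1}x$ and $yx^2=xe_2$; (V8) $yxe_2\cdots e_{n-1}xy=xe_2\cdots e_{n-1}xy$. Then $\langle D\mid V\rangle$ is a monoid presentation of $\mathcal{OCI}_n$ (with respect to the map sending each letter to the transformation of the same name). It has $n$ generators and $\frac12(n^2+3n)$ relations.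
   Context: Let $\Omega_n=\{1<\cdots<n\}$, $\mathcal{I}_n$ the symmetric inverse monoid on $\Omega_n$ (maps on the right, composed left to right). $g$ is the permutation $ig=i+1$ ($1\leqslant i\leqslant n-1$), $ng=1$; $\mathcal{C}_n=\{1,g,\ldots,g^{n-1}\}$; $\mathcal{CI}_n=\{\alpha\in\mathcal{I}_n\mid \alpha=\sigma|_{\mathrm{Dom}(\alpha)}\text{ for some }\sigma\in\mathcal{C}_n\}$; $\mathcal{OCI}_n$ is the submonoid of order-preserving elements of $\mathcal{CI}_n$. $e_i$ is the partial identity on $\Omega_n\setminus\{i\}$; $x$ has domain $\{1,\ldots,n-1\}$ with $ix=i+1$; $y=x^{-1}$ has domain $\{2,\ldots,n\}$ with $iy=i-1$. A presentation $\langle D\mid V\rangle$ defines $M$ via an injective map $D\to M$ whose image generates $M$ if the kernel of the induced homomorphism $D^*\to M$ is the smallest congruence on $D^*$ containing $V$. *)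

From HB Require Import structures.
From mathcomp Require Import all_boot.
Set Implicit Arguments. Unset Strict Implicit. Unset Printing Implicit Defensive.

(* Omega_n = {1 < ... < n} is represented by 'I_n, the ordinal k standing for
   the point k+1.  A partial transformation of Omega_n is a finite function
   'I_n -> option 'I_n (None = undefined). *)
Definition ptrans (n : nat) := {ffun 'I_n -> option 'I_n}.

Definition in_dom n (a : ptrans n) (i : 'I_n) := a i != None.

Definition is_pinj n (a : ptrans n) :=
  forall i j : 'I_n, in_dom a i -> a i = a j -> i = j.

(* maps on the right, composed left to right: i (a b) = (i a) b *)
Definition pcomp n (a b : ptrans n) : ptrans n := [ffun i => obind b (a i)].
Definition pid n : ptrans n := [ffun i => Some i].

(* the permutation g^k : i |-> i + k (mod n) (same formula 0- or 1-based) *)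
Definition gpow n (k : nat) (i : 'I_n) : nat := (val i + k) %% n.

Definition in_CI n (a : ptrans n) :=
  exists2 k, k < n &
    forall i : 'I_n, in_dom a i -> omap val (a i) = Some (gpow k i).

Definition order_preserving n (a : ptrans n) :=
  forall (i j : 'I_n) (ai aj : 'I_n),
    val i < val j -> a i = Some ai -> a j = Some aj -> val ai < val aj.

Definition in_OCI n (a : ptrans n) := in_CI a /\ order_preserving a.

(* the generators; e_ i is indexed as in the paper (1-based label i),
   i.e. the partial identity on Omega_n \ {i}. *)
Definition e_ n (i : nat) : ptrans n :=
  [ffun k : 'I_n => if (val k).+1 == i then None else Some k].
Definition x_ n : ptrans n := [ffun k : 'I_n => insub (val k).+1].
Definition y_ n : ptrans n :=
  [ffun k : 'I_n => if val k == 0 then None else insub (val k).-1].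

Inductive letter := LX | LY | LE of nat.

Definition letter_eqb (a b : letter) : bool :=
  match a, b with
  | LX, LX => true | LY, LY => true | LE i, LE j => i == j | _, _ => false end.
Lemma letter_eqP : Equality.axiom letter_eqb.
Proof.
by case=> [||i] [||j] /=; try constructor => //; apply: (iffP eqP) => [->|[]].
Qed.
HB.instance Definition _ := hasDecEq.Build letter letter_eqP.

Definition es (n : nat) : seq letter := [seq LE i | i <- iota 2 (n - 2)].
Definition D (n : nat) : seq letter := [:: LX; LY] ++ es n.

Definition eval_letter n (l : letter) : ptrans n :=
  match l with LX => x_ n | LY => y_ n | LE i => e_ n i end.

Definition eval_word n (w : seq letter) : ptrans n :=
  foldl (fun acc l => pcomp acc (eval_letter n l)) (pid n) w.

Definition V (n : nat) : seq (seq letter * seq letter) :=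
  [seq ([:: LE i; LE i], [:: LE i]) | i <- iota 2 (n - 2)] ++
  [:: ([:: LX; LY; LX], [:: LX]); ([:: LY; LX; LY], [:: LY])] ++
  [:: ([:: LY; LX; LX; LY], [:: LX; LY; LY; LX])] ++
  [seq ([:: LE i; LE j], [:: LE j; LE i])
              | i <- iota 2 (n - 2), j <- iota i.+1 (n.-1 - i)] ++
  flatten [seq [:: ([:: LX; LY; LE i], [:: LE i; LX; LY]);
                           ([:: LY; LX; LE i], [:: LE i; LY; LX])]
                    | i <- iota 2 (n - 2)] ++
  [seq ([:: LX; LE i.+1], [:: LE i; LX]) | i <- iota 2 (n - 3)] ++
  [:: ([:: LX; LX; LY], [:: LE n.-1; LX]); ([:: LY; LX; LX], [:: LX; LE 2])] ++
  [:: ([:: LY; LX] ++ es n ++ [:: LX; LY], [:: LX] ++ es n ++ [:: LX; LY])].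

Inductive congr (R : seq (seq letter * seq letter)) : seq letter -> seq letter -> Prop :=
| congr_refl w : congr R w w
| congr_sym u v : congr R u v -> congr R v u
| congr_trans u v w : congr R u v -> congr R v w -> congr R u w
| congr_rel p q u v : (u, v) \in R -> congr R (p ++ u ++ q) (p ++ v ++ q).

From mathcomp Require Import all_boot zify.
From Stdlib Require Import Setoid Morphisms.
Set Implicit Arguments. Unset Strict Implicit. Unset Printing Implicit Defensive.

(* Order preservation forbids an element of OCI_n to wrap around, so it is a
   shift k |-> k + m or k |-> k - m restricted to the complement of a set S of
   "holes".  Put e_1 := yx and e_n := xy.  Relations V1-V7 make e_1, ..., e_n
   commuting idempotents which x and y move along (x e_(i+1) = e_i x), so every
   word is equivalent to a normal form (prod_(i in S) e_i) x^m or
   (prod_(i in S) e_i) y^m.  Two normal forms with the same action are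
   equivalent: the points not mapped by the shift may be added to S for free,
   after which S is the complement of the domain and, when the domain is not
   empty, the shift is determined by any defined point.  When the domain is
   empty, the product e_1 ... e_n absorbs x and y, and this is what V8 says. *)

Section Congruence.

Variable R : seq (seq letter * seq letter).

Lemma congr_ctx p q u v : congr R u v -> congr R (p ++ u ++ q) (p ++ v ++ q).
Proof.
elim=> {u v} [w|u v _|u v w _ IHuv _ IHvw|p' q' u v uv_R].
- exact: congr_refl.
- exact: congr_sym.
- exact: congr_trans IHuv IHvw.
- by have := congr_rel (p ++ p') (q' ++ q) uv_R; rewrite -!catA.
Qed.

Lemma congr_of_rel u v : (u, v) \in R -> congr R u v.
Proof. by move/(congr_rel [::] [::]); rewrite /= !cats0. Qed.

End Congruence.

#[local] Hint Resolve congr_refl : core.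

Add Parametric Relation R : (seq letter) (congr R)
  reflexivity proved by (@congr_refl R)
  symmetry proved by (@congr_sym R)
  transitivity proved by (@congr_trans R) as congr_equivalence.

Add Parametric Morphism R : (@cat letter) with signature
  congr R ==> congr R ==> congr R as cat_congr.
Proof.
move=> u u' Hu v v' Hv; apply: (congr_trans (v := u' ++ v)).
- exact: (congr_ctx [::] v Hu).
- by have := congr_ctx u' [::] Hv; rewrite !cats0.
Qed.

Lemma iota_rcons m c : iota m c.+1 = iota m c ++ [:: m + c].
Proof. by rewrite -[c.+1]addn1 iotaD. Qed.

Lemma modn_subn k d : d <= k < d + d -> k %% d = k - d.
Proof.
by move=> /andP[le_dk lt_k]; rewrite -{1}(subnK le_dk) modnDr modn_small //; lia.
Qed.

Lemma sumn_countdown a c : sumn [seq a + c - i.+1 | i <- iota a c] * 2 = c * c.-1.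
Proof.
elim: c a => [|c IH] a //=.
by rewrite -[a + c.+1]addSnnS mulnDl IH; case: c {IH} => [|c] /=; nia.
Qed.

Lemma size_flatten_pairs (T : Type) (f g : nat -> T) s :
  size (flatten [seq [:: f i; g i] | i <- s]) = (size s).*2.
Proof. by elim: s => //= i s ->; rewrite doubleS. Qed.

Section Presentation.

Variable n : nat.
Hypothesis n_gt2 : 2 < n.

(** * The action on points *)

Definition act_letter (l : letter) (o : option nat) : option nat :=
  if o is Some i then
    match l with
    | LX => if i.+1 < n then Some i.+1 else None
    | LY => if i == 0 then None else Some i.-1
    | LE j => if i.+1 == j then None else Some i
    end
  else None.

Definition act_word (w : seq letter) (o : option nat) : option nat :=
  foldl (fun o l => act_letter l o) o w.

Lemma act_word_cat u v o : act_word (u ++ v) o = act_word v (act_word u o).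
Proof. exact: foldl_cat. Qed.

Lemma act_word_None w : act_word w None = None.
Proof. by elim: w. Qed.

Lemma eval_letterE l (k : 'I_n) :
  omap val (eval_letter n l k) = act_letter l (Some (val k)).
Proof.
case: l => [||j] /=; rewrite ffunE.
- by case: insubP => [u Hu /= ->|/negbTE ->]; rewrite ?Hu.
- case: eqP => //= _; have := ltn_ord k.
  by case: insubP => [u Hu /= ->|/negbTE] //; lia.
- by case: eqP.
Qed.

Lemma eval_wordE w (k : 'I_n) :
  omap val (eval_word n w k) = act_word w (Some (val k)).
Proof.
elim/last_ind: w => [|w l IH]; first by rewrite /eval_word /= ffunE.
rewrite /eval_word /act_word !foldl_rcons -/(eval_word n w) -/(act_word w _).
by rewrite ffunE -IH; case: (eval_word n w k) => //= j; rewrite eval_letterE.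
Qed.

Lemma act_word_lt w i j : i < n -> act_word w (Some i) = Some j -> j < n.
Proof.
move=> lt_in; rewrite -[i]/(val (Ordinal lt_in)) -eval_wordE.
by case: (eval_word _ _ _) => //= k [<-].
Qed.

Lemma eval_word_eq u v :
  eval_word n u = eval_word n v <->
  (forall i, i < n -> act_word u (Some i) = act_word v (Some i)).
Proof.
split=> [Euv i lt_in | Euv].
  by rewrite -[i]/(val (Ordinal lt_in)) -!eval_wordE Euv.
apply/ffunP => k; apply: (inj_omap val_inj).
by rewrite !eval_wordE; exact: Euv (ltn_ord k).
Qed.

Lemma act_es a c i :
  act_word [seq LE j | j <- iota a c] (Some i) =
  if a <= i.+1 < a + c then None else Some i.
Proof.
elim: c a => [|c IH] a /=; first by case: ifP => //; lia.
case: eqP => [<-|ne_ia]; first by rewrite act_word_None; case: ifP => //; lia.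
by rewrite IH; case: ifP; case: ifP => //; lia.
Qed.

Ltac decide_shifts := rewrite /act_word /=; repeat (case: ifP => /= ?);
  first [reflexivity | (congr Some; lia) | (exfalso; lia)].

Lemma V_sound u v : (u, v) \in V n ->
  forall i, i < n -> act_word u (Some i) = act_word v (Some i).
Proof.
rewrite /V !mem_cat => uvV k lt_kn.
case/orP: uvV => [/mapP[i]|uvV].
  by rewrite mem_iota => ? [-> ->]; decide_shifts.
case/orP: uvV => [|uvV].
  by rewrite !inE => /orP[] /eqP[-> ->]; decide_shifts.
case/orP: uvV => [|uvV].
  by rewrite !inE => /eqP[-> ->]; decide_shifts.
case/orP: uvV => [/allpairsPdep[i [j [Hi Hj [-> ->]]]]|uvV].
  by move: Hi Hj; rewrite !mem_iota => ? ?; decide_shifts.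
case/orP: uvV => [/flatten_mapP[i]|uvV].
  by rewrite mem_iota => ?; rewrite !inE => /orP[] /eqP[-> ->]; decide_shifts.
case/orP: uvV => [/mapP[i]|uvV].
  by rewrite mem_iota => ? [-> ->]; decide_shifts.
case/orP: uvV => [|].
  by rewrite !inE => /orP[] /eqP[-> ->]; decide_shifts.
rewrite !inE => /eqP[-> ->].
change (act_word ([:: LY; LX] ++ es n ++ [:: LX; LY]) (Some k) =
        act_word ([:: LX] ++ es n ++ [:: LX; LY]) (Some k)).
rewrite !act_word_cat /es /=.
by repeat progress (rewrite ?act_es ?act_word_None /=; try (case: ifP => /= ?));
  first [reflexivity | (exfalso; lia)].
Qed.

Lemma congr_V_sound u v : congr (V n) u v -> eval_word n u = eval_word n v.
Proof.
move=> uv; apply/eval_word_eq.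
elim: uv => {u v} [w|u v _ IH|u v w _ IHuv _ IHvw|p q u v uvV] i lt_in.
- by [].
- by rewrite IH.
- by rewrite IHuv ?IHvw.
- rewrite !act_word_cat; case Ep: (act_word p (Some i)) => [j|].
    by rewrite (V_sound uvV (act_word_lt lt_in Ep)).
  by rewrite !act_word_None.
Qed.

(** * Consequences of the relations *)

Local Notation "u =V v" := (congr (V n) u v) (at level 70).

(* [V_block k] reduces a relation to membership in the family V(k+1) of V. *)
Tactic Notation "V_block" int(k) := apply: congr_of_rel; rewrite /V !mem_cat;
  do k (apply/orP; right); try (apply/orP; left).

Lemma relV1 i : 2 <= i < n -> [:: LE i; LE i] =V [:: LE i].
Proof. by move=> ?; V_block 0; apply/mapP; exists i; rewrite ?mem_iota //; lia. Qed.

Lemma relV2x : [:: LX; LY; LX] =V [:: LX].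
Proof. by V_block 1; rewrite inE eqxx. Qed.

Lemma relV2y : [:: LY; LX; LY] =V [:: LY].
Proof. by V_block 1; rewrite !inE eqxx orbT. Qed.

Lemma relV3 : [:: LY; LX; LX; LY] =V [:: LX; LY; LY; LX].
Proof. by V_block 2; rewrite inE. Qed.

Lemma relV4 i j : 2 <= i -> i < j < n -> [:: LE i; LE j] =V [:: LE j; LE i].
Proof.
move=> ? ?; V_block 3; apply/allpairsPdep; exists i, j.
by rewrite !mem_iota; split=> //; lia.
Qed.

Lemma relV5x i : 2 <= i < n -> [:: LX; LY; LE i] =V [:: LE i; LX; LY].
Proof.
move=> ?; V_block 4; apply/flatten_mapP; exists i; rewrite ?inE ?eqxx //.
by rewrite mem_iota; lia.
Qed.

Lemma relV5y i : 2 <= i < n -> [:: LY; LX; LE i] =V [:: LE i; LY; LX].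
Proof.
move=> ?; V_block 4; apply/flatten_mapP; exists i; rewrite ?inE ?eqxx ?orbT //.
by rewrite mem_iota; lia.
Qed.

Lemma relV6 i : 2 <= i -> i.+1 < n -> [:: LX; LE i.+1] =V [:: LE i; LX].
Proof. by move=> ? ?; V_block 5; apply/mapP; exists i; rewrite ?mem_iota //; lia. Qed.

Lemma relV7x : [:: LX; LX; LY] =V [:: LE n.-1; LX].
Proof. by V_block 6; rewrite inE eqxx. Qed.

Lemma relV7y : [:: LY; LX; LX] =V [:: LX; LE 2].
Proof. by V_block 6; rewrite !inE eqxx orbT. Qed.

Lemma relV8 : [:: LY; LX] ++ es n ++ [:: LX; LY] =V [:: LX] ++ es n ++ [:: LX; LY].
Proof. by V_block 7; rewrite ?inE ?eqxx. Qed.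

(* The word for e_(k+1), with e_1 := yx and e_n := xy. *)
Definition eword k : seq letter :=
  if k == 0 then [:: LY; LX] else if k == n.-1 then [:: LX; LY] else [:: LE k.+1].

Lemma eword_last : eword n.-1 = [:: LX; LY].
Proof. by rewrite /eword eqxx; case: eqP => //; lia. Qed.

Lemma eword_inner k : 0 < k < n.-1 -> eword k = [:: LE k.+1].
Proof. by move=> ?; rewrite /eword; case: eqP => ?; [lia | case: eqP => //; lia]. Qed.

Lemma act_eword j k : j < n -> k < n ->
  act_word (eword j) (Some k) = if k == j then None else Some k.
Proof.
move=> lt_jn lt_kn; rewrite /eword.
case: eqP => [->|nz_j]; first by decide_shifts.
case: eqP => [->|ne_jn]; first by decide_shifts.
by rewrite /act_word /=; case: eqP; case: eqP => //; lia.
Qed.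

Lemma eword_idem k : k < n -> eword k ++ eword k =V eword k.
Proof.
move=> lt_kn; have [->|nz_k] := eqVneq k 0.
  exact: (cat_congr relV2y (congr_refl _ [:: LX])).
have [->|ne_kn] := eqVneq k n.-1.
  by rewrite eword_last; exact: (cat_congr relV2x (congr_refl _ [:: LY])).
by rewrite eword_inner; [apply: relV1 | ]; lia.
Qed.

Lemma eword_comm_lt k l : k < l < n -> eword k ++ eword l =V eword l ++ eword k.
Proof.
move=> lt_kln; have [->|nz_k] := eqVneq k 0.
  have [->|ne_ln] := eqVneq l n.-1; first by rewrite eword_last; exact: relV3.
  by rewrite (@eword_inner l); [apply: relV5y | ]; lia.
have [->|ne_ln] := eqVneq l n.-1.
  by rewrite eword_last (@eword_inner k); [symmetry; apply: relV5x | ]; lia.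
have [Ik Il] : 0 < k < n.-1 /\ 0 < l < n.-1 by lia.
by rewrite (eword_inner Ik) (eword_inner Il); apply: relV4; lia.
Qed.

Lemma eword_comm k l : k < n -> l < n -> eword k ++ eword l =V eword l ++ eword k.
Proof.
move=> lt_kn lt_ln; case: (ltngtP k l) => [lt_kl|lt_lk|->].
- by apply: eword_comm_lt; lia.
- by symmetry; apply: eword_comm_lt; lia.
- by [].
Qed.

Lemma x_eword k : k.+1 < n -> [:: LX] ++ eword k.+1 =V eword k ++ [:: LX].
Proof.
move=> lt_kn; have [->|nz_k] := eqVneq k 0.
  by rewrite eword_inner; [symmetry; exact: relV7y | lia].
have [Ek|ne_kn] := eqVneq k.+1 n.-1.
  have Ik : 0 < k < n.-1 by lia.
  by rewrite Ek eword_last (eword_inner Ik) Ek; exact: relV7x.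
have [Ik Ik1] : 0 < k < n.-1 /\ 0 < k.+1 < n.-1 by lia.
by rewrite (eword_inner Ik) (eword_inner Ik1); apply: relV6; lia.
Qed.

Lemma x_eword0 : [:: LX] ++ eword 0 =V [:: LX].
Proof. exact: relV2x. Qed.

Lemma eword_last_x : eword n.-1 ++ [:: LX] =V [:: LX].
Proof. by rewrite eword_last; exact: relV2x. Qed.

Lemma eword0_y : eword 0 ++ [:: LY] =V [:: LY].
Proof. exact: relV2y. Qed.

Lemma y_eword_last : [:: LY] ++ eword n.-1 =V [:: LY].
Proof. by rewrite eword_last; exact: relV2y. Qed.

Lemma y_eword k : k.+1 < n -> [:: LY] ++ eword k =V eword k.+1 ++ [:: LY].
Proof.
move=> lt_kn; symmetry.
rewrite -[in X in X =V _]relV2y -[[:: LY; LX; LY]]/(eword 0 ++ [:: LY]).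
rewrite catA eword_comm; try lia.
rewrite -[eword 0 ++ _]/([:: LY] ++ [:: LX] ++ eword k.+1) -catA catA x_eword //.
rewrite -!catA -[[:: LX] ++ [:: LY]]eword_last eword_comm; try lia.
by rewrite catA y_eword_last.
Qed.

Definition shift (b : bool) m k : option nat :=
  if b then (if k + m < n then Some (k + m) else None)
  else (if m <= k then Some (k - m) else None).

Definition shiftw (b : bool) m : seq letter := nseq m (if b then LX else LY).

Lemma shiftw_cons b m : shiftw b m.+1 = [:: if b then LX else LY] ++ shiftw b m.
Proof. by []. Qed.

Lemma shiftw_rcons b m : shiftw b m.+1 = shiftw b m ++ [:: if b then LX else LY].
Proof. by rewrite /shiftw -addn1 nseqD. Qed.

Lemma act_shiftw b m k : k < n -> act_word (shiftw b m) (Some k) = shift b m k.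
Proof.
move=> lt_kn; case: b; elim: m => [|m IH];
  rewrite /shift ?addn0 ?subn0 ?lt_kn // shiftw_rcons act_word_cat IH; decide_shifts.
Qed.

Lemma xpow_eword m j : m <= j < n ->
  shiftw true m ++ eword j =V eword (j - m) ++ shiftw true m.
Proof.
elim: m => [|m IH] le_mjn; first by rewrite subn0 cats0.
rewrite shiftw_cons -catA IH; last lia.
rewrite catA (_ : j - m = (j - m.+1).+1); last lia.
by rewrite x_eword -?catA //; lia.
Qed.

Lemma xpow_eword_out m j : j < m -> j < n -> shiftw true m ++ eword j =V shiftw true m.
Proof.
elim: m => [|m IH] lt_jm lt_jn; first lia.
rewrite shiftw_cons -catA; have [lt_jm'|le_mj] := ltnP j m; first by rewrite IH.
have -> : j = m by lia.
by rewrite xpow_eword ?subnn ?catA ?x_eword0 //; lia.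
Qed.

Lemma ypow_eword m j : j + m < n ->
  shiftw false m ++ eword j =V eword (j + m) ++ shiftw false m.
Proof.
elim: m => [|m IH] lt_jmn; first by rewrite addn0 cats0.
rewrite shiftw_cons -catA IH; last lia.
by rewrite catA y_eword -?catA ?addnS //; lia.
Qed.

Lemma ypow_eword_out m j : j < n <= j + m -> shiftw false m ++ eword j =V shiftw false m.
Proof.
elim: m => [|m IH] jmn; first lia.
rewrite shiftw_cons -catA; have [le_njm|lt_jmn] := leqP n (j + m).
  by rewrite IH //; lia.
rewrite ypow_eword // (_ : j + m = n.-1); last lia.
by rewrite catA y_eword_last.
Qed.

Lemma eword_xpow_out m j : j < n <= j + m -> eword j ++ shiftw true m =V shiftw true m.
Proof.
elim: m => [|m IH] jmn; first lia.
rewrite shiftw_rcons catA; have [le_njm|lt_jmn] := leqP n (j + m).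
  by rewrite IH //; lia.
have -> : j = n.-1 - m by lia.
rewrite -xpow_eword; last lia.
by rewrite -catA eword_last_x.
Qed.

Lemma eword_ypow_out m j : j < m -> j < n -> eword j ++ shiftw false m =V shiftw false m.
Proof.
elim: m => [|m IH] lt_jm lt_jn; first lia.
rewrite shiftw_rcons catA; have [lt_jm'|le_mj] := ltnP j m; first by rewrite IH.
have -> : j = m by lia.
have := @ypow_eword m 0; rewrite add0n => <-; last lia.
by rewrite -catA eword0_y.
Qed.

Lemma eword_shiftw_out b m j : j < n -> shift b m j = None ->
  eword j ++ shiftw b m =V shiftw b m.
Proof.
move=> lt_jn; rewrite /shift; case: b; case: ifP => // out_j _.
  by apply: eword_xpow_out; lia.
by apply: eword_ypow_out; lia.
Qed.

(** * Products of idempotents *)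

Definition eprod (s : seq nat) : seq letter := flatten (map eword s).

Lemma eprod_cons k s : eprod (k :: s) = eword k ++ eprod s.
Proof. by []. Qed.

Lemma eprod_cat s t : eprod (s ++ t) = eprod s ++ eprod t.
Proof. by rewrite /eprod map_cat flatten_cat. Qed.

Lemma eprod1 k : eprod [:: k] = eword k.
Proof. exact: cats0. Qed.

Lemma act_eprod s k : all (gtn n) s -> k < n ->
  act_word (eprod s) (Some k) = if k \in s then None else Some k.
Proof.
move=> + lt_kn; elim: s => [|j s IH] //= /andP[lt_jn s_lt].
by rewrite act_word_cat act_eword // inE; case: eqP => _; rewrite ?act_word_None ?IH.
Qed.

Lemma eprod_comm s j : all (gtn n) s -> j < n -> eprod s ++ eword j =V eword j ++ eprod s.
Proof.
move=> + lt_jn; elim: s => [|k s IH] /=; first by rewrite cats0.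
by case/andP=> lt_kn s_lt; rewrite -catA IH // !catA eword_comm.
Qed.

Lemma eword_eprod_mem s j : all (gtn n) s -> j \in s -> eword j ++ eprod s =V eprod s.
Proof.
elim: s => [|k s IH] //= /andP[lt_kn s_lt]; rewrite inE => /orP[/eqP->|js].
  by rewrite catA eword_idem.
by rewrite catA eword_comm -?catA ?IH //; apply/(allP s_lt).
Qed.

Lemma eprod_undup s : all (gtn n) s -> eprod s =V eprod (undup s).
Proof.
elim: s => [|k s IH] //= /andP[lt_kn s_lt]; case: ifP => [ks|_].
  by rewrite -IH // eprod_cons eword_eprod_mem.
by rewrite !eprod_cons IH.
Qed.

Lemma eprod_perm s t : all (gtn n) s -> perm_eq s t -> eprod s =V eprod t.
Proof.
elim: s t => [|k s IH] t; first by move=> _ /perm_size/esym/size0nil->.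
move=> /andP[lt_kn s_lt] st.
have kt : k \in t by rewrite -(perm_mem st) inE eqxx.
move: st; case/splitPr: kt => t1 t2 st.
have st' : perm_eq s (t1 ++ t2).
  rewrite -(perm_cons k); apply: (perm_trans st).
  exact: permEl (perm_catCA t1 [:: k] t2).
have : all (gtn n) (t1 ++ t2) by rewrite -(perm_all _ st').
rewrite all_cat => /andP[t1_lt _].
by rewrite eprod_cons (IH _ s_lt st') !eprod_cat eprod_cons catA -eprod_comm // -catA.
Qed.

Lemma eprod_eq_mem s t : all (gtn n) s -> all (gtn n) t -> s =i t -> eprod s =V eprod t.
Proof.
move=> s_lt t_lt st; rewrite eprod_undup // (eprod_undup t_lt).
apply: eprod_perm; first by rewrite all_undup.
by apply: uniq_perm; rewrite ?undup_uniq // => k; rewrite !mem_undup.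
Qed.

Lemma eprod_shiftw_out b m t : all (fun k => (k < n) && (shift b m k == None)) t ->
  eprod t ++ shiftw b m =V shiftw b m.
Proof.
elim: t => [|k t IH] // /andP[/andP[lt_kn /eqP out_k] t_out].
by rewrite eprod_cons -catA IH // eword_shiftw_out.
Qed.

Lemma eprod_iota_inner a c : 0 < a -> a + c < n ->
  eprod (iota a c) = [seq LE i | i <- iota a.+1 c].
Proof.
elim: c a => [|c IH] a a_gt0 lt_acn //.
have Ia : 0 < a < n.-1 by lia.
by rewrite [iota a _]/= eprod_cons (eword_inner Ia) IH //; lia.
Qed.

Lemma x_eprod a c : a + c < n ->
  [:: LX] ++ eprod (iota a.+1 c) =V eprod (iota a c) ++ [:: LX].
Proof.
elim: c a => [|c IH] a lt_acn //.
rewrite [iota a.+1 _]/= [iota a _]/= !eprod_cons catA x_eword; last lia.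
by rewrite -!catA IH //; lia.
Qed.

Lemma es_eprod : es n = eprod (iota 1 (n - 2)).
Proof. by rewrite eprod_iota_inner //; lia. Qed.

Lemma iota1_pred : iota 1 n.-1 = iota 1 (n - 2) ++ [:: n.-1].
Proof.
have -> : n.-1 = (n - 2).+1 by lia.
by rewrite iota_rcons add1n.
Qed.

Lemma eprod_full : eprod (iota 0 n) = [:: LY; LX] ++ es n ++ [:: LX; LY].
Proof.
rewrite -{1}(ltn_predK n_gt2) [iota 0 _]/= iota1_pred.
by rewrite eprod_cons eprod_cat eprod1 eword_last es_eprod.
Qed.

Lemma eprod_full_x : eprod (iota 0 n) =V [:: LY; LX] ++ es n ++ [:: LX].
Proof.
rewrite eprod_full relV8 -eword_last es_eprod -eprod1 -eprod_cat -iota1_pred.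
rewrite x_eprod; last lia.
by have -> : n.-1 = (n - 2).+1 by lia.
Qed.

Lemma eprod_full_cat_x : eprod (iota 0 n) ++ [:: LX] =V eprod (iota 0 n).
Proof.
rewrite {1}eprod_full -!catA -[[:: LX; LY] ++ [:: LX]]/[:: LX; LY; LX] relV2x.
by rewrite eprod_full_x.
Qed.

Lemma eprod_full_cat_y : eprod (iota 0 n) ++ [:: LY] =V eprod (iota 0 n).
Proof. by rewrite {1}eprod_full_x -!catA eprod_full. Qed.

Lemma eprod_full_shiftw b m : eprod (iota 0 n) ++ shiftw b m =V eprod (iota 0 n).
Proof.
elim: m => [|m IH]; first by rewrite cats0.
rewrite shiftw_rcons catA IH.
by case: (b); [exact: eprod_full_cat_x | exact: eprod_full_cat_y].
Qed.

(** * Normal forms *)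

Definition pshift b m (s : seq nat) k : option nat :=
  if k \in s then None else shift b m k.

Definition nf b m s : seq letter := eprod s ++ shiftw b m.

Definition preim b m j : seq nat :=
  if b then (if m <= j then [:: j - m] else [::])
  else (if j + m < n then [:: j + m] else [::]).

Lemma preim_lt b m j : j < n -> all (gtn n) (preim b m j).
Proof.
by move=> lt_jn; rewrite /preim; case: b; case: ifP => //= ?; rewrite andbT; lia.
Qed.

Lemma act_nf b m s k : all (gtn n) s -> k < n ->
  act_word (nf b m s) (Some k) = pshift b m s k.
Proof.
move=> s_lt lt_kn; rewrite act_word_cat act_eprod // /pshift.
by case: ifP => _; rewrite ?act_word_None ?act_shiftw.
Qed.

Lemma shiftw_eword b m j : j < n ->
  shiftw b m ++ eword j =V eprod (preim b m j) ++ shiftw b m.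
Proof.
move=> lt_jn; rewrite /preim; case: b.
  case: leqP => [le_mj|lt_jm]; last by rewrite xpow_eword_out.
  by rewrite eprod1 xpow_eword //; lia.
case: ltnP => [lt_jmn|le_njm]; first by rewrite eprod1 ypow_eword.
by rewrite ypow_eword_out //; lia.
Qed.

Lemma nf_cat_eword b m s j : j < n -> nf b m s ++ eword j =V nf b m (s ++ preim b m j).
Proof. by move=> lt_jn; rewrite /nf -catA shiftw_eword // catA -eprod_cat. Qed.

Lemma D_cases l : l \in D n -> [\/ l = LX, l = LY | exists2 i, l = LE i & 1 < i < n].
Proof.
rewrite /D mem_cat !inE => /orP[/orP[]/eqP->|]; [exact: Or31 | exact: Or32 |].
by case/mapP=> i; rewrite mem_iota => lt_i ->; apply: Or33; exists i => //; lia.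
Qed.

Lemma nf_cat_letter b m s l : l \in D n -> all (gtn n) s ->
  exists b' m' s', all (gtn n) s' /\ nf b m s ++ [:: l] =V nf b' m' s'.
Proof.
move=> lD s_lt; case/D_cases: lD => [->|->|[i -> lt_i]].
- have nf_x c : nf true c s ++ [:: LX] = nf true c.+1 s by rewrite /nf shiftw_rcons catA.
  case: b; first by exists true, m.+1, s; rewrite nf_x.
  case: m => [|m]; first by exists true, 1, s; rewrite -nf_x.
  exists false, m, (s ++ preim false m 0).
  split; first by rewrite all_cat s_lt preim_lt //; lia.
  have -> : nf false m.+1 s ++ [:: LX] = nf false m s ++ eword 0.
    by rewrite /nf shiftw_rcons -!catA.
  by apply: nf_cat_eword; lia.
- have nf_y c : nf false c s ++ [:: LY] = nf false c.+1 s by rewrite /nf shiftw_rcons catA.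
  case: b; last by exists false, m.+1, s; rewrite nf_y.
  case: m => [|m]; first by exists false, 1, s; rewrite -nf_y.
  exists true, m, (s ++ preim true m n.-1).
  split; first by rewrite all_cat s_lt preim_lt //; lia.
  have -> : nf true m.+1 s ++ [:: LY] = nf true m s ++ eword n.-1.
    by rewrite eword_last /nf shiftw_rcons -!catA.
  by apply: nf_cat_eword; lia.
- exists b, m, (s ++ preim b m i.-1).
  split; first by rewrite all_cat s_lt preim_lt //; lia.
  have -> : [:: LE i] = eword i.-1 by rewrite eword_inner ?prednK //; lia.
  by apply: nf_cat_eword; lia.
Qed.

Lemma nf_exists w : all (mem (D n)) w -> exists b m s, all (gtn n) s /\ w =V nf b m s.
Proof.
elim/last_ind: w => [|w l IH]; first by exists true, 0, [::].
rewrite all_rcons => /andP[lD /IH[b [m [s [s_lt w_nf]]]]].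
have [b' [m' [s' [s'_lt nf_l]]]] := nf_cat_letter b m lD s_lt.
by exists b', m', s'; split=> //; rewrite -cats1 w_nf.
Qed.

Definition holes b m s : seq nat := [seq k <- iota 0 n | pshift b m s k == None].

Lemma nf_holes b m s : all (gtn n) s -> nf b m s =V eprod (holes b m s) ++ shiftw b m.
Proof.
move=> s_lt; set out := [seq k <- iota 0 n | shift b m k == None].
have out_absorbed : eprod out ++ shiftw b m =V shiftw b m.
  apply/eprod_shiftw_out/allP => k; rewrite mem_filter mem_iota => /andP[-> lt_kn].
  by rewrite andbT; lia.
rewrite /nf -[in X in X =V _]out_absorbed catA -eprod_cat.
apply: cat_congr => //; apply: eprod_eq_mem.
- rewrite all_cat s_lt; apply/allP => k; rewrite mem_filter mem_iota => /andP[_ lt_kn].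
  by rewrite /gtn /=; lia.
- by apply/allP => k; rewrite mem_filter mem_iota => /andP[_ lt_kn]; rewrite /gtn /=; lia.
move=> k; rewrite mem_cat !mem_filter mem_iota /pshift.
by case: ifP => [ks|_] //=; move: (allP s_lt k ks); rewrite /gtn /= add0n => ->.
Qed.

Lemma shiftw_pshift_inj b m s b' m' s' k j :
  pshift b m s k = Some j -> pshift b' m' s' k = Some j -> shiftw b m = shiftw b' m'.
Proof.
rewrite /pshift /shift; case: b; case: b'; repeat case: ifP => // ?; move=> [<-] [E];
  first [by have -> : m = m' by lia | by have [-> ->] : m = 0 /\ m' = 0 by lia].
Qed.

Lemma nf_unique b m s b' m' s' : all (gtn n) s -> all (gtn n) s' ->
  (forall k, k < n -> pshift b m s k = pshift b' m' s' k) -> nf b m s =V nf b' m' s'.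
Proof.
move=> s_lt s'_lt same; rewrite (nf_holes b m s_lt) (nf_holes b' m' s'_lt).
have -> : holes b' m' s' = holes b m s.
  by apply: eq_in_filter => k; rewrite mem_iota => /andP[_ lt_kn]; rewrite same.
case: (boolP (has (fun k => pshift b m s k != None) (iota 0 n))) => [/hasP[k]|/hasPn undef].
  rewrite mem_iota => /andP[_ lt_kn]; case Ek: (pshift b m s k) => [j|] // _.
  have Ek' : pshift b' m' s' k = Some j by rewrite -same.
  by rewrite (shiftw_pshift_inj Ek Ek').
have -> : holes b m s = iota 0 n by apply/all_filterP/allP => k /undef; rewrite negbK.
by rewrite !eprod_full_shiftw.
Qed.

(** * The elements of OCI_n *)

Lemma OCI_pshift (a : ptrans n) b m s :
  (forall k : 'I_n, omap val (a k) = pshift b m s k) -> in_OCI a.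
Proof.
move=> a_pshift.
have dom_shift (i : 'I_n) :
    in_dom a i -> omap val (a i) = shift b m i /\ shift b m i != None.
  by move: (a_pshift i); rewrite /in_dom /pshift; case: ifP => _; case: (a i) => //= ? <-.
split.
  exists (if b then (if m < n then m else 0) else (n - m) %% n).
    by case: (b); [case: ifP => //; lia | rewrite ltn_pmod //; lia].
  move=> i /dom_shift[-> def_i]; have lt_in := ltn_ord i.
  move: def_i; rewrite /shift /gpow /=; case: (b); case: ifP => // le_i _.
    by rewrite ifT ?modn_small //; lia.
  have [->|nz_m] := eqVneq m 0; first by rewrite !subn0 modnn addn0 modn_small.
  rewrite [(n - m) %% n]modn_small; last lia.
  by rewrite modn_subn; [congr Some | ]; lia.
move=> i j ai aj /= lt_ij; move: (a_pshift i) (a_pshift j).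
rewrite /pshift /shift => + + Ei Ej; rewrite Ei Ej /=.
by case: ifP => // _; case: ifP => // _;
  case: (b); repeat case: ifP => // ?; move=> [->] [->]; lia.
Qed.

Lemma pshift_of_OCI (a : ptrans n) : in_OCI a ->
  exists b m s, all (gtn n) s /\ forall k : 'I_n, omap val (a k) = pshift b m s k.
Proof.
move=> [[c lt_cn a_g] a_mono].
set s := [seq nat_of_ord k | k <- enum 'I_n & a k == None].
have s_lt : all (gtn n) s by apply/allP => _ /mapP[k _ ->]; exact: ltn_ord.
have mem_s (k : 'I_n) : (nat_of_ord k \in s) = ~~ in_dom a k.
  by rewrite (mem_map (@ord_inj n)) mem_filter mem_enum andbT /in_dom negbK.
have undef (k : 'I_n) : ~~ in_dom a k -> a k = None by rewrite negbK => /eqP.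
case: (boolP [exists i : 'I_n, in_dom a i && (val i + c < n)]).
  case/existsP=> i0 /andP[dom_i0 lt_i0].
  (* A point wrapping around would land below the image of i0. *)
  have no_wrap (k : 'I_n) : in_dom a k -> k + c < n.
    move=> dom_k; rewrite ltnNge; apply/negP => le_nk.
    have lt_kn := ltn_ord k; have lt_i0k : val i0 < val k by move: lt_i0 => /=; lia.
    move: (a_g _ dom_i0) (a_g _ dom_k) (a_mono i0 k); rewrite /gpow.
    case: (a i0) => [ai|] //; case: (a k) => [ak|] //= [Ei0] [Ek].
    move=> /(_ ai ak lt_i0k erefl erefl) /=.
    by move: lt_i0 => /= lt_i0; rewrite Ei0 Ek modn_small // modn_subn; lia.
  exists true, c, s; split=> // k; rewrite /pshift mem_s /shift.
  case: (boolP (in_dom a k)) => /= dom_k; last by rewrite undef.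
  by rewrite no_wrap // a_g // /gpow modn_small //; exact: no_wrap.
move/existsPn=> wrap.
exists false, (n - c), s; split=> // k; rewrite /pshift mem_s /shift.
case: (boolP (in_dom a k)) => /= dom_k; last by rewrite undef.
move: (wrap k); rewrite dom_k /= -leqNgt => le_nkc; have lt_kn := ltn_ord k.
rewrite a_g // /gpow /= ifT; last lia.
by rewrite modn_subn; [congr Some | ]; lia.
Qed.

Lemma eword_inD k : k < n -> all (mem (D n)) (eword k).
Proof.
move=> lt_kn; rewrite /eword; case: eqP => // nz_k; case: eqP => // ne_kn.
rewrite /= andbT /D mem_cat; apply/orP; right; apply/mapP; exists k.+1 => //.
by rewrite mem_iota; lia.
Qed.

Lemma nf_inD b m s : all (gtn n) s -> all (mem (D n)) (nf b m s).
Proof.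
move=> s_lt; rewrite all_cat /shiftw all_nseq; apply/andP.
split; last by case: b; rewrite orbC.
by apply/allP => l /flatten_mapP[k /(allP s_lt) lt_kn /(allP (eword_inD lt_kn))].
Qed.

Lemma eval_nf b m s (k : 'I_n) : all (gtn n) s ->
  omap val (eval_word n (nf b m s) k) = pshift b m s k.
Proof. by move=> s_lt; rewrite eval_wordE act_nf //; exact: ltn_ord. Qed.

Lemma OCI_eval_word w : all (mem (D n)) w -> in_OCI (eval_word n w).
Proof.
case/nf_exists=> b [m [s [s_lt /congr_V_sound ->]]].
by apply: (@OCI_pshift _ b m s) => k; exact: eval_nf.
Qed.

Lemma OCI_generated (a : ptrans n) :
  in_OCI a -> exists2 w, all (mem (D n)) w & a = eval_word n w.
Proof.
case/pshift_of_OCI=> b [m [s [s_lt a_pshift]]]; exists (nf b m s); first exact: nf_inD.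
by apply/ffunP => k; apply: (inj_omap val_inj); rewrite eval_nf.
Qed.

Lemma eval_word_kernel u v : all (mem (D n)) u -> all (mem (D n)) v ->
  eval_word n u = eval_word n v <-> u =V v.
Proof.
move=> uD vD; split; last exact: congr_V_sound.
case/nf_exists: uD => b [m [s [s_lt u_nf]]].
case/nf_exists: vD => b' [m' [s' [s'_lt v_nf]]].
rewrite (congr_V_sound u_nf) (congr_V_sound v_nf) eval_word_eq u_nf v_nf => same.
by apply: nf_unique => // k lt_kn; rewrite -!act_nf ?same.
Qed.

Lemma eval_letter_inj : {in D n &, injective (@eval_letter n)}.
Proof.
move=> l1 l2 l1D l2D E.
have act_eq i : i < n -> act_letter l1 (Some i) = act_letter l2 (Some i).
  by move=> lt_in; rewrite -[i]/(val (Ordinal lt_in)) -!eval_letterE E.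
case/D_cases: l1D act_eq => [->|->|[i -> lt_i]];
  case/D_cases: l2D => [->|->|[j -> lt_j]] // act_eq;
  move: (act_eq 0 (ltnW (ltnW n_gt2))) => /=; rewrite ?(ltnW n_gt2) //;
  try by case: eqP => //; lia.
move=> _; have lt_i1n : i.-1 < n by lia.
move: (act_eq _ lt_i1n) => /=; rewrite prednK ?eqxx; last lia.
by case: eqP => [->|].
Qed.

Lemma size_D : size (D n) = n.
Proof. by rewrite /D size_cat size_map size_iota /=; lia. Qed.

Lemma uniq_D : uniq (D n).
Proof.
rewrite /D cat_uniq /=; apply/andP; split; first by apply/hasPn => l /mapP[i _ ->].
by rewrite map_inj_uniq ?iota_uniq // => i j [].
Qed.

Lemma size_V : size (V n) = (n ^ 2 + 3 * n)./2.
Proof.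
rewrite /V !size_cat !size_map size_iota size_allpairs_dep size_flatten_pairs size_iota /=.
set S := sumn _.
have S2 : S * 2 = (n - 2) * (n - 3).
  rewrite /S (eq_map (g := fun i => 2 + (n - 2) - i.+1)) ?sumn_countdown; last first.
    by move=> i; rewrite size_iota; lia.
  by congr (_ * _); lia.
rewrite size_iota.
(* The summands are the sizes of V1, V2, V3, V4 (= S), V5, V6 and V7 + V8. *)
have -> : n ^ 2 + 3 * n = (n - 2 + (2 + (1 + (S + ((n - 2).*2 + ((n - 3) + (2 + 1))))))).*2.
  by rewrite -muln2; nia.
by rewrite doubleK.
Qed.

End Presentation.

Theorem theorem2p17 (n : nat) : 3 <= n ->
  {in D n &, injective (@eval_letter n)} /\
  (forall a : ptrans n, in_OCI a <-> exists2 w, all (mem (D n)) w & a = eval_word n w) /\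
  (forall u v, all (mem (D n)) u -> all (mem (D n)) v ->
     (eval_word n u = eval_word n v <-> congr (V n) u v)) /\
  size (D n) = n /\ uniq (D n) /\ size (V n) = (n ^ 2 + 3 * n)./2.
Proof.
move=> n_gt2; split; first exact: eval_letter_inj.
split.
  by move=> a; split; [exact: OCI_generated | case=> w wD ->; exact: OCI_eval_word].
split; first exact: eval_word_kernel.
by split; [exact: size_D | split; [exact: uniq_D | exact: size_V]].
Qed.
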